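(* Let $A=\sigma(R)\langle x_1,\dots,x_n\rangle$ be a quasi-commutative bijective $\sigma$-PBW extension of a left Noetherian ring $R$. Let $c_1,\dots,c_t\in R\setminus\{0\}$ and let $\mathbf X_1=X_1\mathbf e_{i_1},\dots,\mathbf X_t=X_t\mathbf e_{i_t}$ be monomials of $A^m$ (the indices $i_1,\dots,i_t\in\{1,\dots,m\}$ need not be distinct). Let $L=[c_1\mathbf X_1\ \cdots\ c_t\mathbf X_t]$ and $$\mathrm{Syz}(L)=\{(h_1,\dots,h_t)^T\in A^t:\ h_1c_1\mathbf X_1+\dots+h_tc_t\mathbf X_t=\mathbf 0\}.$$ Then $\mathrm{Syz}(L)$ has a finite generating set consisting of homogeneous syzygies.
   Context: Let $R\subseteq A$ be rings. $A$ is a $\sigma$-PBW extension of $R$, written $A=\sigma(R)\langle x_1,\dots,x_n\rangle$, if there are $x_1,\dots,x_n\in A\setminus R$ such that: (i) $A$ is a free left $R$-module with basis $\mathrm{Mon}(A)=\{x^\alpha=x_1^{\alpha_1}\cdots x_n^{\alpha_n}:\alpha\in\mathbb N^n\}$, with $x^0=1$; (ii) for every $i$ and every $r\in R\setminus\{0\}$ there is $c_{i,r}\in R\setminus\{0\}$ with $x_ir-c_{i,r}x_i\in R$; (iii) for all $i,j$ there is $c_{i,j}\in R\setminus\{0\}$ with $x_jx_i-c_{i,j}x_ix_j\in R+Rx_1+\dots+Rx_n$. There are injective ring endomorphisms $\sigma_i$ of $R$ with $x_ir=\sigma_i(r)x_i+\delta_i(r)$, where $\delta_i$ are $\sigma_i$-derivations.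 $A$ is quasi-commutative if $x_ir=c_{i,r}x_i$ and $x_jx_i=c_{i,j}x_ix_j$ exactly. $A$ is bijective if each $\sigma_i$ is bijective and $c_{i,j}$ is invertible for $i<j$. $\mathrm{Mon}(A)$ carries a monomial order, i.e. a total order $\succeq$ with: - $x^\beta\succeq x^\alpha\Rightarrow lm(x^\gamma x^\beta x^\lambda)\succeq lm(x^\gamma x^\alpha x^\lambda)$; - $x^\alpha\succeq1$; - degree compatibility. $lm$ denotes the leading monomial; $lm(x^\alpha x^\beta)=x^{\alpha+\beta}$. $A^m$ is the free left $A$-module of column vectors with canonical basis $\mathbf e_1,\dots,\mathbf e_m$. Monomials of $A^m$ are $X\mathbf e_i$ with $X\in\mathrm{Mon}(A)$. A term of $A$ is an element $cx^\alpha$ with $c\in R$. A syzygy $\mathbf h=(h_1,\dots,h_t)^T\in\mathrm{Syz}(L)$ is homogeneous of degree $\mathbf X=X\mathbf e_i$ ($X\in\mathrm{Mon}(A)$) if: - each $h_j$ is a term; - for each $j$, either $h_j=0$ or $lm(lm(h_j)\mathbf X_j)=\mathbf X$, where $lm(x^\gamma\cdot x^\alpha\mathbf e_i)=x^{\gamma+\alpha}\mathbf e_i$. *)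

From HB Require Import structures.
From mathcomp Require Import all_boot all_order all_algebra.
Set Implicit Arguments. Unset Strict Implicit. Unset Printing Implicit Defensive.
Import GRing.Theory.
Local Open Scope ring_scope.

Definition expo (n : nat) := {ffun 'I_n -> nat}.

Definition expo_add (n : nat) (a b : expo n) : expo n := [ffun i => (a i + b i)%N].

Definition mon (A : nzRingType) (n : nat) (x : 'I_n -> A) (a : expo n) : A :=
  \prod_(i < n) x i ^+ a i.

Definition left_ideal (R : nzRingType) (I : pred R) : Prop :=
  0 \in I /\ (forall a b, a \in I -> b \in I -> a + b \in I) /\
  (forall r a, a \in I -> r * a \in I).

Definition left_noetherian (R : nzRingType) : Prop :=
  forall I : pred R, left_ideal I ->
    exists s : seq R, forall a : R,
      a \in I <-> exists c : 'I_(size s) -> R, a = \sum_(k < size s) c k * s`_k.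

Definition sigma_PBW (R A : nzRingType) (iota : {rmorphism R -> A}) (n : nat)
    (x : 'I_n -> A) : Prop :=
  injective iota /\
  (forall i r, x i <> iota r) /\
  (forall a : A, exists s : seq (expo n * R),
      a = \sum_(p <- s) iota p.2 * mon x p.1) /\
  (forall (s : seq (expo n)) (c : expo n -> R), uniq s ->
      \sum_(al <- s) iota (c al) * mon x al = 0 -> forall al, al \in s -> c al = 0) /\
  (forall i (r : R), r != 0 -> exists c : R, c != 0 /\
      exists r' : R, x i * iota r - iota c * x i = iota r') /\
  (forall i j, exists c : R, c != 0 /\
      exists (r0 : R) (r : 'I_n -> R),
        x j * x i - iota c * x i * x j = iota r0 + \sum_(k < n) iota (r k) * x k).

Definition quasi_commutative (R A : nzRingType) (iota : {rmorphism R -> A}) (n : nat)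
    (x : 'I_n -> A) : Prop :=
  (forall i (r : R), r != 0 -> exists c : R, c != 0 /\ x i * iota r = iota c * x i) /\
  (forall i j, exists c : R, c != 0 /\ x j * x i = iota c * x i * x j).

Definition bijective_PBW (R A : nzRingType) (iota : {rmorphism R -> A}) (n : nat)
    (x : 'I_n -> A) : Prop :=
  (exists (sigma delta : 'I_n -> R -> R),
      (forall i r, x i * iota r = iota (sigma i r) * x i + iota (delta i r)) /\
      (forall i, bijective (sigma i))) /\
  (forall i j : 'I_n, (i < j)%N -> exists c : R, (exists d : R, c * d = 1 /\ d * c = 1) /\
      exists (r0 : R) (r : 'I_n -> R),
        x j * x i - iota c * x i * x j = iota r0 + \sum_(k < n) iota (r k) * x k).

Definition vec_e (A : nzRingType) (m : nat) (i : 'I_m) (a : A) : 'cV[A]_m :=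
  \col_(l < m) (if l == i then a else 0).

(* Syz(L) for L = [c_1 X_1 ... c_t X_t], X_k = x^{al_k} e_{idx_k}. *)
Definition syzygy (R A : nzRingType) (iota : {rmorphism R -> A}) (n m t : nat)
    (x : 'I_n -> A) (c : 'I_t -> R) (al : 'I_t -> expo n) (idx : 'I_t -> 'I_m)
    (h : 'cV[A]_t) : Prop :=
  \sum_(k < t) vec_e (idx k) (h k 0 * (iota (c k) * mon x (al k))) = 0.

Definition is_term (R A : nzRingType) (iota : {rmorphism R -> A}) (n : nat)
    (x : 'I_n -> A) (a : A) : Prop :=
  exists (d : R) (g : expo n), a = iota d * mon x g.

(* h is homogeneous of degree x^be e_i: each h_j is a term and, when h_j <> 0,
   lm(lm(h_j) X_j) = X, i.e. writing h_j = d x^gamma (d <> 0, so lm h_j = x^gamma),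
   idx_j = i and gamma + al_j = be. *)
Definition homogeneous_of_degree (R A : nzRingType) (iota : {rmorphism R -> A})
    (n m t : nat) (x : 'I_n -> A) (al : 'I_t -> expo n) (idx : 'I_t -> 'I_m)
    (h : 'cV[A]_t) (be : expo n) (i : 'I_m) : Prop :=
  forall j : 'I_t, exists (d : R) (g : expo n),
    h j 0 = iota d * mon x g /\
    (h j 0 = 0 \/ (idx j = i /\ expo_add g (al j) = be)).

Definition homogeneous_syz (R A : nzRingType) (iota : {rmorphism R -> A})
    (n m t : nat) (x : 'I_n -> A) (al : 'I_t -> expo n) (idx : 'I_t -> 'I_m)
    (h : 'cV[A]_t) : Prop :=
  exists (be : expo n) (i : 'I_m), homogeneous_of_degree iota x al idx h be i.

(* In a quasi-commutative bijective extension, x^a r = s(r) x^a for a bijective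
   multiplicative s, and x^a x^b = u x^(a+b) with u a unit of R.  Hence a
   syzygy splits into homogeneous components of degrees x^b e_i, and the
   component of degree x^b e_i with coefficient vector v in R^t is a syzygy
   iff v solves a single R-linear equation supported on the set J of those j
   with i_j = i and x^(al j) dividing x^b.  That component is x^(b - mu) times
   a homogeneous syzygy of degree x^mu e_i, mu = lcm {al j | j in J}, whose
   coefficient vectors form an R-submodule of R^t, finitely generated because
   R is left Noetherian.  As only finitely many pairs (i, J) occur, finitely
   many homogeneous syzygies generate Syz(L). *)

From Pilot Require Import Defs.
From HB Require Import structures.
From mathcomp Require Import all_boot all_order all_algebra.
From mathcomp Require Import zify.
From mathcomp Require boolp.
Set Implicit Arguments. Unset Strict Implicit. Unset Printing Implicit Defensive.
Import GRing.Theory.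
Local Open Scope ring_scope.

HB.instance Definition _ (n : nat) := Choice.copy (expo n) {ffun 'I_n -> nat}.

Fixpoint is_lincomb (S : pzRingType) (V : lmodType S) (s : seq V) (v : V) : Prop :=
  if s is g :: s' then exists r w, is_lincomb s' w /\ v = r *: g + w else v = 0.

Section LinearCombinations.
Variables (S : pzRingType) (V : lmodType S).
Implicit Types (s : seq V) (u v : V).

Lemma is_lincomb0 s : is_lincomb s 0.
Proof. by elim: s => //= g s IH; exists 0, 0; rewrite scale0r addr0. Qed.

Lemma is_lincombD s u v : is_lincomb s u -> is_lincomb s v -> is_lincomb s (u + v).
Proof.
elim: s u v => [|g s IH] u v /=; first by move=> -> ->; rewrite addr0.
move=> [r [w [hw ->]]] [r' [w' [hw' ->]]]; exists (r + r'), (w + w'); split.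
  exact: IH.
by rewrite scalerDl addrACA.
Qed.

Lemma is_lincombZ s a v : is_lincomb s v -> is_lincomb s (a *: v).
Proof.
elim: s v => [|g s IH] v /=; first by move=> ->; rewrite scaler0.
move=> [r [w [hw ->]]]; exists (a * r), (a *: w); split; first exact: IH.
by rewrite scalerDr scalerA.
Qed.

Lemma is_lincomb_sum s (I : Type) (l : seq I) (F : I -> V) :
  (forall i, is_lincomb s (F i)) -> is_lincomb s (\sum_(i <- l) F i).
Proof.
by move=> hF; apply: big_ind => //; [exact: is_lincomb0 | exact: is_lincombD].
Qed.

Lemma is_lincomb_mem s v : v \in s -> is_lincomb s v.
Proof.
elim: s => [|g s IH] //=; rewrite inE => /orP[/eqP ->|vs].
  by exists 1, 0; rewrite scale1r addr0; split; first exact: is_lincomb0.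
by exists 0, v; rewrite scale0r add0r; split; first exact: IH.
Qed.

Lemma is_lincomb_subset s s' v :
  {subset s <= s'} -> is_lincomb s v -> is_lincomb s' v.
Proof.
elim: s v => [|g s IH] v ss' /=; first by move=> ->; apply: is_lincomb0.
move=> [r [w [hw ->]]]; apply: is_lincombD.
  by apply/is_lincombZ/is_lincomb_mem/ss'; rewrite inE eqxx.
by apply: IH hw => u us; apply: ss'; rewrite inE us orbT.
Qed.

Lemma is_lincombP s v : is_lincomb s v ->
  exists a : 'I_(size s) -> S, v = \sum_(k < size s) a k *: s`_k.
Proof.
elim: s v => [|g s IH] v /=; first by move=> ->; exists (fun=> 0); rewrite big_ord0.
move=> [r [w [/IH [a ->] ->]]].
exists (fun k : 'I_(size s).+1 => if unlift ord0 k is Some k' then a k' else r).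
rewrite big_ord_recl /= unlift_none; congr (_ + _); apply: eq_bigr => i _ /=.
by rewrite liftK.
Qed.

Lemma is_lincomb_map (S' : pzRingType) (W : lmodType S') (f : V -> W) (g : S -> S')
    s v :
  f 0 = 0 -> (forall a u w, f (a *: u + w) = g a *: f u + f w) ->
  is_lincomb s v -> is_lincomb (map f s) (f v).
Proof.
move=> f0 fZD; elim: s v => [|u s IH] v /=; first by move=> ->.
by move=> [r [w [hw ->]]]; exists (g r), (f w); rewrite fZD; split; first exact: IH.
Qed.

End LinearCombinations.

Section NoetherianModules.
Variables (R : nzRingType) (t : nat).
Hypothesis noethR : left_noetherian R.

Definition submodule (P : 'cV[R]_t -> Prop) :=
  [/\ P 0, forall u v, P u -> P v -> P (u + v) & forall a u, P u -> P (a *: u)].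

Lemma submodule_sum P (I : Type) (l : seq I) (F : I -> 'cV[R]_t) :
  submodule P -> (forall i, P (F i)) -> P (\sum_(i <- l) F i).
Proof. by case=> P0 PD _ PF; apply: big_ind. Qed.

Lemma submodule_truncated P k : submodule P ->
  submodule (fun v => P v /\ forall j : 'I_t, (k <= j)%N -> v j 0 = 0).
Proof.
case=> P0 PD PZ; split.
- by split=> // j _; rewrite mxE.
- move=> u v [Pu u0] [Pv v0]; split=> [|j kj]; first exact: PD.
  by rewrite mxE u0 ?v0 ?addr0.
- move=> a u [Pu u0]; split=> [|j kj]; first exact: PZ.
  by rewrite mxE u0 ?mulr0.
Qed.

Lemma coord_ideal_fingen P (j : 'I_t) : submodule P ->
  exists (k : nat) (V : 'I_k -> 'cV[R]_t), (forall l, P (V l)) /\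
    forall v, P v -> exists cc : 'I_k -> R, v j 0 = \sum_(l < k) cc l * V l j 0.
Proof.
case=> P0 PD PZ.
pose I := fun a : R => boolp.asbool (exists v, P v /\ v j 0 = a).
have idealI : left_ideal I.
  split; [|split].
  - by apply/boolp.asboolP; exists 0; rewrite mxE.
  - move=> _ _ /boolp.asboolP[u [Pu <-]] /boolp.asboolP[v [Pv <-]].
    by apply/boolp.asboolP; exists (u + v); rewrite mxE; split; first exact: PD.
  - move=> r _ /boolp.asboolP[u [Pu <-]].
    by apply/boolp.asboolP; exists (r *: u); rewrite mxE; split; first exact: PZ.
have [s hs] := noethR idealI.
have lift (l : 'I_(size s)) : exists v, P v /\ v j 0 = s`_l.
  apply/boolp.asboolP/hs; exists (fun k => (k == l)%:R).
  rewrite (bigD1 l) //= eqxx mul1r big1 ?addr0 // => k /negPf ->.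
  by rewrite mul0r.
have [V hV] := fin_all_exists lift.
exists (size s), V; split=> [l|v Pv]; first by case: (hV l).
have /hs[cc ->] : v j 0 \in I by apply/boolp.asboolP; exists v.
by exists cc; apply: eq_bigr => l _; case: (hV l) => _ ->.
Qed.

(* Induction on the number [k] of coordinates allowed to be nonzero. *)
Lemma left_noetherian_submodule_fingen P : submodule P ->
  exists2 gens : seq 'cV[R]_t,
    (forall g, g \in gens -> P g) & forall v, P v -> is_lincomb gens v.
Proof.
move=> subP.
suff /(_ t (leqnn t)) [gens Pgens span] : forall k, (k <= t)%N ->
    exists2 gens : seq 'cV[R]_t, (forall g, g \in gens -> P g) &
      forall v, P v -> (forall j : 'I_t, (k <= j)%N -> v j 0 = 0) -> is_lincomb gens v.
  by exists gens => // v Pv; apply: span => // j; rewrite leqNgt ltn_ord.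
elim=> [_|k IH ltkt].
  exists [::] => // v _ v0 /=; apply/matrixP => i j.
  by rewrite (ord1 j) mxE v0.
have [gens Pgens span] := IH (ltnW ltkt).
case: (subP) => subP0 subPD subPZ.
have [l [V [PV lead]]] :=
  coord_ideal_fingen (Ordinal ltkt) (submodule_truncated k.+1 subP).
exists (gens ++ [seq V i | i <- enum 'I_l]).
  move=> g; rewrite mem_cat => /orP[/Pgens //|/mapP[i _ ->]].
  by case: (PV i).
move=> v Pv v0; have [cc vk] := lead v (conj Pv v0).
pose w := v - \sum_(i < l) cc i *: V i.
have Pw : P w.
  apply: (subPD) => //; rewrite -scaleN1r; apply: (subPZ).
  by apply: submodule_sum => // i; apply: (subPZ); case: (PV i).
have w0 (j : 'I_t) : (k <= j)%N -> w j 0 = 0.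
  move=> lekj; rewrite !mxE summxE; have [ltkj|lejk] := ltnP k j.
    rewrite v0 // big1 ?subrr // => i _.
    by rewrite mxE; case: (PV i) => _ ->; rewrite ?mulr0.
  have -> : j = Ordinal ltkt by apply/val_inj/eqP; rewrite /= eqn_leq lejk.
  rewrite vk; apply/eqP; rewrite subr_eq0; apply/eqP/eq_bigr => i _.
  by rewrite mxE.
rewrite -(subrK (\sum_(i < l) cc i *: V i) v) -/w; apply: is_lincombD.
  by apply: is_lincomb_subset (span w Pw w0) => g gs; rewrite mem_cat gs.
apply: is_lincomb_sum => i; apply/is_lincombZ/is_lincomb_mem.
by rewrite mem_cat map_f ?mem_enum ?orbT.
Qed.

End NoetherianModules.

Section Exponents.
Variable n : nat.
Implicit Types a b g : expo n.

Definition expo_le a b : bool := [forall j, a j <= b j]%N.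
Definition expo_sub b a : expo n := [ffun j => b j - a j]%N.

Lemma expo_subK a b : expo_le a b -> expo_add (expo_sub b a) a = b.
Proof. by move/forallP => le_ab; apply/ffunP => j; rewrite !ffunE subnK. Qed.

Lemma expo_addK g a : expo_sub (expo_add g a) a = g.
Proof. by apply/ffunP => j; rewrite !ffunE addnK. Qed.

Lemma expo_le_addl g a : expo_le a (expo_add g a).
Proof. by apply/forallP => j; rewrite ffunE leq_addl. Qed.

Lemma expo_add_eq g a b : (expo_add g a == b) = expo_le a b && (g == expo_sub b a).
Proof.
apply/eqP/andP => [<-|[le_ab /eqP ->]]; last exact: expo_subK.
by rewrite expo_addK expo_le_addl.
Qed.

Lemma expo_le_trans a b g : expo_le a b -> expo_le b g -> expo_le a g.
Proof.
move=> /forallP le_ab /forallP le_bg; apply/forallP => j.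
exact: leq_trans (le_bg j).
Qed.

End Exponents.

Section Invertible.
Variable R : nzRingType.

Definition invertible (u : R) := exists v, u * v = 1 /\ v * u = 1.

Lemma invertible1 : invertible 1.
Proof. by exists 1; rewrite mulr1. Qed.

Lemma invertibleM u v : invertible u -> invertible v -> invertible (u * v).
Proof.
move=> [u' [uu' u'u]] [v' [vv' v'v]]; exists (v' * u'); split.
  by rewrite mulrA -(mulrA u) vv' mulr1 uu'.
by rewrite mulrA -(mulrA v') u'u mulr1 v'v.
Qed.

End Invertible.

Section PBW.
Variables (R A : nzRingType) (iota : {rmorphism R -> A}) (n : nat) (x : 'I_n -> A).
Local Notation E := (expo n).
Local Notation mon := (mon x).

Definition sum_terms (s : seq (E * R)) : A := \sum_(p <- s) iota p.2 * mon p.1.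

Hypothesis mon_span : forall a, exists s, a = sum_terms s.
Hypothesis mon_free : forall (s : seq E) (c : E -> R), uniq s ->
  \sum_(b <- s) iota (c b) * mon b = 0 -> forall b, b \in s -> c b = 0.

Lemma sum_terms_collect s : sum_terms s =
  \sum_(b <- undup (map fst s)) iota (\sum_(p <- s | p.1 == b) p.2) * mon b.
Proof.
under [RHS]eq_bigr => b _ do rewrite rmorph_sum mulr_suml big_mkcond.
rewrite exchange_big /sum_terms big_seq [RHS]big_seq; apply: eq_bigr => p sp.
rewrite -big_mkcond -big_filter (@eq_filter _ _ (pred1 p.1)); last first.
  by move=> b; rewrite /= eq_sym.
by rewrite filter_pred1_uniq ?undup_uniq ?mem_undup ?map_f // big_seq1.
Qed.

Lemma sum_terms_eq0 s : sum_terms s = 0 -> forall b, \sum_(p <- s | p.1 == b) p.2 = 0.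
Proof.
rewrite sum_terms_collect => /mon_free sum0 b.
have [bs|bNs] := boolP (b \in undup (map fst s)); first exact: sum0 (undup_uniq _) b bs.
rewrite big1_seq // => p /andP[/eqP pb ps]; case/negP: bNs.
by rewrite mem_undup -pb map_f.
Qed.

Let terms_of_spec a : exists s, a == sum_terms s.
Proof. by have [s ->] := mon_span a; exists s. Qed.

Definition terms_of a := xchoose (terms_of_spec a).

Definition coef (b : E) (a : A) : R := \sum_(p <- terms_of a | p.1 == b) p.2.

Lemma coefE s a b : a = sum_terms s -> coef b a = \sum_(p <- s | p.1 == b) p.2.
Proof.
move=> ->; rewrite /coef; set s' := terms_of _.
have ss' : sum_terms s = sum_terms s' by apply/eqP/(xchooseP (terms_of_spec _)).
have /sum_terms_eq0/(_ b)/eqP : sum_terms (s' ++ map (fun p => (p.1, - p.2)) s) = 0.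
  rewrite /sum_terms big_cat big_map /= -/(sum_terms s') -ss' -big_split.
  apply: big1 => p _.
  by rewrite rmorphN mulNr; apply: subrr.
by rewrite big_cat big_map /= sumrN subr_eq0 => /eqP.
Qed.

Lemma coef_is_zmod_morphism b : zmod_morphism (coef b).
Proof.
move=> a a'; have [s ->] := mon_span a; have [s' ->] := mon_span a'.
rewrite (coefE b (erefl _)) (coefE b (erefl _)).
rewrite (@coefE (s ++ map (fun p => (p.1, - p.2)) s')).
  by rewrite big_cat big_map -sumrN.
rewrite /sum_terms big_cat big_map -sumrN; congr (_ + _); apply: eq_bigr => p _.
by rewrite rmorphN mulNr.
Qed.

HB.instance Definition _ b :=
  GRing.isZmodMorphism.Build A R (coef b) (coef_is_zmod_morphism b).

Lemma coef_term r g b : coef b (iota r * mon g) = if g == b then r else 0.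
Proof.
rewrite (@coefE [:: (g, r)]); last by rewrite /sum_terms big_seq1.
by rewrite big_cons big_nil; case: eqP; rewrite ?addr0.
Qed.

Lemma coef_inj a a' : (forall b, coef b a = coef b a') -> a = a'.
Proof.
move=> eq_coef; apply/eqP; rewrite -subr_eq0; apply/eqP.
have [s es] := mon_span (a - a'); rewrite es sum_terms_collect big1 // => b _.
by rewrite -(coefE b es) raddfB /= eq_coef subrr rmorph0 mul0r.
Qed.

Lemma coef_finite_support a : exists S : seq E, forall g, g \notin S -> coef g a = 0.
Proof.
have [s es] := mon_span a; exists (map fst s) => g gNs; rewrite (coefE g es).
by rewrite big1_seq // => p /andP[/eqP pg ps]; case/negP: gNs; rewrite -pg map_f.
Qed.

Definition expo0 : E := [ffun => 0%N].
Definition expo1 (i : 'I_n) : E := [ffun j => nat_of_bool (j == i)].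

Lemma mon_expo0 : mon expo0 = 1.
Proof. by rewrite /Defs.mon big1 // => j _; rewrite ffunE expr0. Qed.

Lemma mon_sorted_support (g : E) (s : seq 'I_n) : sorted ltn (map val s) ->
  (forall j, j \notin s -> g j = 0%N) -> mon g = \prod_(j <- s) x j ^+ g j.
Proof.
move=> sorted_s g0; transitivity (\prod_(j < n | j \in s) x j ^+ g j).
  rewrite [RHS]big_mkcond; apply: eq_bigr => j _.
  by case: ifPn => // /g0 ->; rewrite expr0.
rewrite -[LHS]big_filter; suff -> : [seq j <- index_enum 'I_n | j \in s] = s by [].
have lt_trans : transitive (relpre (@nat_of_ord n) ltn).
  by move=> b a c; exact: ltn_trans.
apply: (irr_sorted_eq lt_trans) => [j|||j].
- by rewrite /= ltnn.
- apply: sorted_filter => //; rewrite -sorted_map /index_enum !unlock.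
  by rewrite val_ord_enum iota_ltn_sorted.
- by rewrite -sorted_map.
- by rewrite mem_filter mem_index_enum andbT.
Qed.

Lemma mon_expo1 i : mon (expo1 i) = x i.
Proof.
rewrite (@mon_sorted_support _ [:: i]) ?big_seq1 ?ffunE ?eqxx ?expr1 //.
by move=> j; rewrite inE ffunE => /negPf ->.
Qed.

Lemma mon_expo1_pair (k i : 'I_n) : (k < i)%N ->
  mon (expo_add (expo1 k) (expo1 i)) = x k * x i.
Proof.
move=> ltki; have neki : k != i by rewrite neq_ltn ltki.
rewrite (@mon_sorted_support _ [:: k; i]) /=.
- rewrite big_cons big_seq1 !ffunE !eqxx (negPf neki) (eq_sym i) (negPf neki).
  by rewrite !expr1.
- by rewrite andbT.
- by move=> j; rewrite !inE !ffunE negb_or => /andP[/negPf -> /negPf ->].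
Qed.

Lemma coef_x r i b : coef b (iota r * x i) = if expo1 i == b then r else 0.
Proof. by rewrite -mon_expo1 coef_term. Qed.

Lemma coef_const r b : coef b (iota r) = if expo0 == b then r else 0.
Proof. by rewrite -[iota r]mulr1 -mon_expo0 coef_term. Qed.

Lemma expo1_neq0 i : (expo1 i == expo0) = false.
Proof. by apply/eqP => /ffunP/(_ i); rewrite !ffunE eqxx. Qed.

(* In a quasi-commutative extension the derivations of the bijective
   presentation vanish, since [x i * iota r] has no constant term. *)
Lemma quasi_commutative_sigma : quasi_commutative iota x -> bijective_PBW iota x ->
  exists2 sigma : 'I_n -> R -> R,
    forall i r, x i * iota r = iota (sigma i r) * x i & forall i, bijective (sigma i).
Proof.
move=> [xR _] [[sigma [delta [x_sd sigma_bij]]] _]; exists sigma => // i r.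
suff delta0 : delta i r = 0 by rewrite x_sd delta0 rmorph0 addr0.
have : coef expo0 (x i * iota r) = 0.
  have [->|r0] := eqVneq r 0; first by rewrite rmorph0 mulr0 raddf0.
  by have [c' [_ ->]] := xR i r r0; rewrite coef_x expo1_neq0.
by rewrite x_sd raddfD /= coef_x expo1_neq0 coef_const eqxx add0r.
Qed.

(* Comparing coefficients of [x k * x i] shows that the constant of the
   quasi-commutative relation is the invertible one of the bijective one. *)
Lemma quasi_commutative_swap : quasi_commutative iota x -> bijective_PBW iota x ->
  forall k i : 'I_n, (k < i)%N ->
  exists2 u, invertible u & x i * x k = iota u * x k * x i.
Proof.
move=> [_ xx] [_ xx_unit] k i ltki.
have [c [_ e_c]] := xx k i; have [d [d_unit [r0 [r e_d]]]] := xx_unit k i ltki.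
exists c => //; suff -> : c = d by [].
have neki : k != i by rewrite neq_ltn ltki.
set b := expo_add (expo1 k) (expo1 i).
have : iota (c - d) * mon b = iota r0 + \sum_(l < n) iota (r l) * x l.
  by rewrite -e_d mon_expo1_pair // rmorphB mulrBl e_c !mulrA.
move/(congr1 (coef b)); rewrite coef_term eqxx raddfD raddf_sum /= coef_const.
rewrite big1 => [|l _]; last first.
  rewrite coef_x; case: eqP => // /ffunP eq_b.
  have [elk|nelk] := eqVneq l k.
    by move: (eq_b i); rewrite !ffunE elk eqxx (eq_sym i) (negPf neki).
  by move: (eq_b k); rewrite !ffunE eqxx eq_sym (negPf nelk).
have -> : (expo0 == b) = false.
  by apply/eqP => /ffunP/(_ k); rewrite !ffunE eqxx.
by rewrite addr0 => /eqP; rewrite subr_eq0 => /eqP.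
Qed.

Lemma iota_mon_inj g a b : iota a * mon g = iota b * mon g -> a = b.
Proof. by move/(congr1 (coef g)); rewrite !coef_term eqxx. Qed.

Definition skew_aut (s : R -> R) :=
  [/\ bijective s, s 0 = 0, s 1 = 1 & {morph s : a b / a * b}].

Definition normalizing (a : A) :=
  exists2 s, skew_aut s & forall r, a * iota r = iota (s r) * a.

Lemma skew_aut_invertible s u : skew_aut s -> invertible u -> invertible (s u).
Proof.
by move=> [_ _ s1 sM] [v [uv vu]]; exists (s v); rewrite -!sM uv vu s1.
Qed.

Lemma skew_aut_eq0 s r : skew_aut s -> s r = 0 -> r = 0.
Proof. by move=> [s_bij s0 _ _] sr0; apply: (bij_inj s_bij); rewrite sr0 s0. Qed.

Lemma normalizing1 : normalizing 1.
Proof.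
by exists id => [|r]; [split=> //; exists id | rewrite mulr1 mul1r].
Qed.

Lemma normalizingM a b : normalizing a -> normalizing b -> normalizing (a * b).
Proof.
move=> [s [s_bij s0 s1 sM] e_s] [s' [s'_bij s'0 s'1 s'M] e_s'].
exists (s \o s') => [|r]; last by rewrite -mulrA e_s' mulrA e_s mulrA.
split=> [|/=|/=|a' b' /=]; rewrite ?s'0 ?s'1 ?s'M //; exact: bij_comp.
Qed.

Lemma normalizing_exp a e : normalizing a -> normalizing (a ^+ e).
Proof.
move=> na; elim: e => [|e IH]; first by rewrite expr0; apply: normalizing1.
by rewrite exprS; apply: normalizingM.
Qed.

Section SkewMonomials.
Variable sigma : 'I_n -> R -> R.
Hypothesis x_sigma : forall i r, x i * iota r = iota (sigma i r) * x i.
Hypothesis sigma_bij : forall i, bijective (sigma i).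
Hypothesis x_swap : forall k i : 'I_n, (k < i)%N ->
  exists2 u, invertible u & x i * x k = iota u * x k * x i.

Lemma skew_aut_sigma i : skew_aut (sigma i).
Proof.
have x_inj a b : iota a * x i = iota b * x i -> a = b.
  by rewrite -mon_expo1; apply: iota_mon_inj.
split=> [||| a b]; first exact: sigma_bij.
- by apply: x_inj; rewrite -x_sigma !rmorph0 mulr0 mul0r.
- by apply: x_inj; rewrite -x_sigma !rmorph1 mulr1 mul1r.
- apply: x_inj; rewrite -x_sigma rmorphM mulrA x_sigma -mulrA x_sigma mulrA.
  by rewrite -rmorphM.
Qed.

Lemma normalizing_x i : normalizing (x i).
Proof. by exists (sigma i); [exact: skew_aut_sigma | exact: x_sigma]. Qed.

Lemma normalizing_mon g : normalizing (mon g).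
Proof.
apply: (big_ind normalizing); [exact: normalizing1 | exact: normalizingM |].
by move=> i _; apply/normalizing_exp/normalizing_x.
Qed.

Lemma x_mul_xpow (k i : 'I_n) e : (k < i)%N ->
  exists2 u, invertible u & x i * x k ^+ e = iota u * x k ^+ e * x i.
Proof.
move=> ltki; elim: e => [|e [u u_inv IH]].
  by exists 1; [exact: invertible1 | rewrite !expr0 rmorph1 !mul1r mulr1].
have [c c_inv e_c] := x_swap ltki.
exists (c * sigma k u).
  exact: invertibleM c_inv (skew_aut_invertible (skew_aut_sigma k) u_inv).
by rewrite exprS mulrA e_c -mulrA IH !mulrA -(mulrA (iota c)) x_sigma rmorphM !mulrA.
Qed.

Lemma x_mul_sorted_prod (i : 'I_n) (f : 'I_n -> nat) (r : seq 'I_n) :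
  sorted ltn (map val r) -> i \in r -> exists2 u, invertible u &
  x i * \prod_(k <- r) x k ^+ f k = iota u * \prod_(k <- r) x k ^+ (f k + (k == i)).
Proof.
elim: r => [|k r IH] //= sorted_kr; rewrite inE => ikr.
have lt_kr : all (ltn k) (map val r) by apply: (order_path_min ltn_trans sorted_kr).
have sorted_r : sorted ltn (map val r) by apply: (path_sorted sorted_kr).
have [eki|neki] := eqVneq k i.
  rewrite -{}eki in ikr *; exists 1; first exact: invertible1.
  rewrite !big_cons rmorph1 mul1r eqxx addn1 exprS mulrA; congr (_ * _).
  apply: eq_big_seq => j jr; have : (k < j)%N by move/allP: lt_kr; apply; rewrite map_f.
  by case: eqP => [->|_]; rewrite ?ltnn ?addn0.
have ir : i \in r by move: ikr; rewrite eq_sym (negPf neki).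
have ltki : (k < i)%N by move/allP: lt_kr; apply; rewrite map_f.
have [u1 u1_inv e1] := x_mul_xpow (f k) ltki.
have [u2 u2_inv e2] := IH sorted_r ir.
have [s s_aut e_s] := normalizing_exp (f k) (normalizing_x k).
exists (u1 * s u2); first exact: invertibleM u1_inv (skew_aut_invertible s_aut u2_inv).
rewrite !big_cons (negPf neki) addn0 mulrA e1 -!mulrA e2 !mulrA.
by rewrite -(mulrA (iota u1)) e_s rmorphM !mulrA.
Qed.

Lemma x_mul_mon (i : 'I_n) (nu : E) :
  exists2 u, invertible u & x i * mon nu = iota u * mon (expo_add nu (expo1 i)).
Proof.
have sorted_enum : sorted ltn (map val (index_enum 'I_n)).
  by rewrite /index_enum !unlock val_ord_enum iota_ltn_sorted.
have [u u_inv e] := x_mul_sorted_prod nu sorted_enum (mem_index_enum i).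
exists u; rewrite // /Defs.mon e; congr (_ * _).
by apply: eq_bigr => k _; rewrite !ffunE.
Qed.

Lemma xpow_mul_mon (i : 'I_n) e (nu : E) : exists2 u, invertible u &
  x i ^+ e * mon nu = iota u * mon [ffun j => (nu j + e * (j == i))%N].
Proof.
elim: e => [|e [u u_inv IH]].
  exists 1; first exact: invertible1.
  rewrite expr0 mul1r rmorph1 mul1r.
  by congr (Defs.mon _ _); apply/ffunP => j; rewrite ffunE mul0n addn0.
have [u' u'_inv e'] := x_mul_mon i [ffun j => (nu j + e * (j == i))%N].
exists (sigma i u * u').
  exact: invertibleM (skew_aut_invertible (skew_aut_sigma i) u_inv) u'_inv.
rewrite exprS -mulrA IH mulrA x_sigma -mulrA e' mulrA -rmorphM; congr (_ * _).
by congr (Defs.mon _ _); apply/ffunP => j; rewrite !ffunE; case: (j == i) => /=; lia.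
Qed.

Lemma prod_mul_mon (f : 'I_n -> nat) (r : seq 'I_n) (nu : E) :
  exists2 u, invertible u & (\prod_(k <- r) x k ^+ f k) * mon nu =
    iota u * mon [ffun j => (nu j + f j * count_mem j r)%N].
Proof.
elim: r => [|k r [u u_inv IH]].
  exists 1; first exact: invertible1.
  rewrite big_nil mul1r rmorph1 mul1r.
  by congr (Defs.mon _ _); apply/ffunP => j; rewrite ffunE muln0 addn0.
have [u' u'_inv e'] :=
  xpow_mul_mon k (f k) [ffun j => (nu j + f j * count_mem j r)%N].
have [s s_aut e_s] := normalizing_exp (f k) (normalizing_x k).
exists (s u * u'); first exact: invertibleM (skew_aut_invertible s_aut u_inv) u'_inv.
rewrite big_cons -mulrA IH mulrA e_s -mulrA e' mulrA -rmorphM; congr (_ * _).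
congr (Defs.mon _ _); apply/ffunP => j; rewrite !ffunE /=.
by case: (eqVneq j k) => [->|]; rewrite /=; lia.
Qed.

Lemma mon_mul (g nu : E) :
  exists2 u, invertible u & mon g * mon nu = iota u * mon (expo_add g nu).
Proof.
have [u u_inv e] := prod_mul_mon g (index_enum 'I_n) nu.
exists u; rewrite // {1}/Defs.mon e; congr (_ * _); congr (Defs.mon _ _).
apply/ffunP => j; rewrite !ffunE (count_uniq_mem _ (index_enum_uniq _)).
by rewrite mem_index_enum muln1 addnC.
Qed.

Lemma mon_iota_mon g b r : exists w, mon g * iota r * mon b = iota w * mon (expo_add g b).
Proof.
have [s _ e_s] := normalizing_mon g; have [u _ e_u] := mon_mul g b.
by exists (s r * u); rewrite e_s -mulrA e_u mulrA rmorphM.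
Qed.

Lemma mon_iota_mon_eq0 g b r : mon g * iota r * mon b = 0 -> r = 0.
Proof.
have [s s_aut e_s] := normalizing_mon g; have [u [u' [uu' _]] e_u] := mon_mul g b.
rewrite e_s -mulrA e_u mulrA -rmorphM => /(congr1 (coef (expo_add g b))).
rewrite coef_term eqxx raddf0 => sru0; apply: skew_aut_eq0 s_aut _.
by rewrite -[s r]mulr1 -uu' mulrA sru0 mul0r.
Qed.

Section Syzygies.
Variables (m t : nat) (c : 'I_t -> R) (al : 'I_t -> E) (idx : 'I_t -> 'I_m).

Definition wcoef j b := coef b (mon (expo_sub b (al j)) * iota (c j) * mon (al j)).

Lemma wcoefE j b : expo_le (al j) b ->
  mon (expo_sub b (al j)) * iota (c j) * mon (al j) = iota (wcoef j b) * mon b.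
Proof.
move=> le_jb; have [w] := mon_iota_mon (expo_sub b (al j)) (al j) (c j).
by rewrite expo_subK // /wcoef => ->; rewrite coef_term eqxx.
Qed.

Lemma term_mul_wcoef j g r : iota r * mon g * iota (c j) * mon (al j) =
  iota (r * wcoef j (expo_add g (al j))) * mon (expo_add g (al j)).
Proof.
have := wcoefE (expo_le_addl g (al j)); rewrite expo_addK => e.
by rewrite -!mulrA (mulrA (mon g)) e mulrA rmorphM.
Qed.

Lemma coef_mul_wcoef a j b : coef b (a * iota (c j) * mon (al j)) =
  if expo_le (al j) b then coef (expo_sub b (al j)) a * wcoef j b else 0.
Proof.
have [s ->] := mon_span a; rewrite (coefE _ (erefl (sum_terms s))).
rewrite /sum_terms !mulr_suml raddf_sum.
under eq_bigr do rewrite /= term_mul_wcoef coef_term expo_add_eq.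
case: ifP => le_jb /=; last by rewrite big1.
rewrite [RHS]big_mkcond.
apply: eq_bigr => p _; case: eqP => // ->.
by rewrite expo_subK.
Qed.

Definition contrib b i : {set 'I_t} := [set j | (idx j == i) && expo_le (al j) b].

Definition homog b i (v : 'cV[R]_t) : 'cV[A]_t :=
  \col_j (if j \in contrib b i then iota (v j 0) * mon (expo_sub b (al j)) else 0).

Definition Rsyzygy b i (v : 'cV[R]_t) : bool :=
  \sum_(j in contrib b i) v j 0 * wcoef j b == 0.

Lemma syzygy_entry (h : 'cV[A]_t) l :
  (\sum_(k < t) vec_e (idx k) (h k 0 * (iota (c k) * mon (al k)))) l 0 =
  \sum_(k | idx k == l) h k 0 * iota (c k) * mon (al k).
Proof.
rewrite summxE [RHS]big_mkcond; apply: eq_bigr => k _; rewrite mxE eq_sym.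
by case: ifP; rewrite ?mulrA.
Qed.

Lemma homog_syzygy b i v : Rsyzygy b i v -> syzygy iota x c al idx (homog b i v).
Proof.
move=> /eqP Rsyz; apply/matrixP => l z; rewrite (ord1 z) syzygy_entry mxE.
transitivity (\sum_(k | idx k == l)
    (if k \in contrib b i then iota (v k 0 * wcoef k b) * mon b else 0)).
  apply: eq_bigr => k _; rewrite mxE; case: ifP => [|_]; last by rewrite !mul0r.
  by rewrite inE => /andP[_ le_kb]; rewrite term_mul_wcoef expo_subK.
rewrite -big_mkcondr /=; have [->|neli] := eqVneq l i.
  transitivity (iota (\sum_(j in contrib b i) v j 0 * wcoef j b) * mon b).
    rewrite rmorph_sum mulr_suml; apply: eq_bigl => j.
    by rewrite inE andbA andbb.
  by rewrite Rsyz rmorph0 mul0r.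
rewrite big_pred0 // => k; rewrite inE.
by case: eqP => // ->; rewrite (negPf neli).
Qed.

Lemma homog_homogeneous b i v : homogeneous_syz iota x al idx (homog b i v).
Proof.
exists b, i => j; rewrite mxE; case: ifP => [|_].
  rewrite inE => /andP[/eqP idx_j le_jb].
  by exists (v j 0), (expo_sub b (al j)); split=> //; right; rewrite expo_subK.
by exists 0, expo0; rewrite rmorph0 mul0r; split=> //; left.
Qed.

Lemma homog0 b i : homog b i 0 = 0.
Proof. by apply/matrixP => j z; rewrite !mxE; case: ifP; rewrite ?rmorph0 ?mul0r. Qed.

Lemma homogZD b i a u v :
  homog b i (a *: u + v) = iota a *: homog b i u + homog b i v.
Proof.
apply/matrixP => j z; rewrite !mxE; case: ifP => _; last by rewrite mulr0 addr0.
by rewrite rmorphD rmorphM mulrDl mulrA.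
Qed.

Lemma Rsyzygy_submodule b i : submodule (fun v => Rsyzygy b i v).
Proof.
split=> [|u v /eqP su /eqP sv|a u /eqP su]; apply/eqP.
- by apply: big1 => j _; rewrite mxE mul0r.
- by under eq_bigr do rewrite mxE mulrDl; rewrite big_split /= su sv addr0.
- by under eq_bigr do rewrite mxE -mulrA; rewrite -mulr_sumr su mulr0.
Qed.

Definition lcm_expo (J : {set 'I_t}) : E := [ffun l => \max_(j in J) al j l]%N.

Lemma expo_le_lcm (J : {set 'I_t}) j : j \in J -> expo_le (al j) (lcm_expo J).
Proof.
move=> jJ; apply/forallP => l; rewrite ffunE.
exact: (@leq_bigmax_cond _ (mem J) (fun j => al j l) j jJ).
Qed.

Lemma lcm_contrib_le b i : expo_le (lcm_expo (contrib b i)) b.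
Proof.
apply/forallP => l; rewrite ffunE; apply/bigmax_leqP => j.
by rewrite inE => /andP[_ /forallP].
Qed.

Lemma contrib_lcm b i : contrib (lcm_expo (contrib b i)) i = contrib b i.
Proof.
apply/setP => j; rewrite !inE; apply/andP/andP => [[idx_j le_j]|[idx_j le_j]].
  by split=> //; apply: expo_le_trans le_j (lcm_contrib_le b i).
by split=> //; apply: expo_le_lcm; rewrite inE idx_j.
Qed.

Lemma homog_lcm b i v : Rsyzygy b i v ->
  let mu := lcm_expo (contrib b i) in
  exists2 v', Rsyzygy mu i v' & homog b i v = mon (expo_sub b mu) *: homog mu i v'.
Proof.
move=> Rsyz mu; set d := expo_sub b mu.
have le_mub : expo_le mu b := lcm_contrib_le b i.
have lift j : exists z, j \in contrib b i ->
    mon d * iota z * mon (expo_sub mu (al j)) = iota (v j 0) * mon (expo_sub b (al j)).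
  have [jJ|] := boolP (j \in contrib b i); last by exists 0.
  have le_jmu : expo_le (al j) mu by apply: expo_le_lcm.
  have [u [u' [_ u'u]] e_u] := mon_mul d (expo_sub mu (al j)).
  have [s [[s' ss' s's] _ _ _] e_s] := normalizing_mon d.
  exists (s' (v j 0 * u')) => _; rewrite e_s s's -mulrA e_u mulrA -rmorphM -mulrA.
  rewrite u'u mulr1; congr (_ * Defs.mon _ _); apply/ffunP => l; rewrite !ffunE.
  move/forallP: le_jmu => /(_ l); move/forallP: le_mub => /(_ l).
  rewrite /mu ffunE; lia.
have [z e_z] := fin_all_exists lift.
exists (\col_j z j); last first.
  apply/matrixP => j k; rewrite (ord1 k) !mxE contrib_lcm.
  by case: ifP => jJ; rewrite ?mulr0 // mulrA e_z.
apply/eqP/(@mon_iota_mon_eq0 d mu).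
transitivity (\sum_(j in contrib b i) iota (v j 0 * wcoef j b) * mon b); last first.
  by rewrite -mulr_suml -rmorph_sum (eqP Rsyz) rmorph0 mul0r.
rewrite contrib_lcm rmorph_sum mulr_sumr mulr_suml; apply: eq_bigr => j jJ.
have le_jb : expo_le (al j) b by move: jJ; rewrite inE => /andP[].
rewrite mxE rmorphM -!mulrA -(wcoefE (expo_le_lcm jJ)) !mulrA (e_z j jJ).
by rewrite term_mul_wcoef expo_subK.
Qed.

Definition coef_col (h : 'cV[A]_t) b : 'cV[R]_t :=
  \col_j coef (expo_sub b (al j)) (h j 0).

Lemma syzygy_Rsyzygy (h : 'cV[A]_t) b i : syzygy iota x c al idx h ->
  Rsyzygy b i (coef_col h b).
Proof.
move=> /(congr1 (fun M : 'cV[A]_m => coef b (M i 0))) /=.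
rewrite syzygy_entry mxE raddf0 raddf_sum /=.
under eq_bigr do rewrite coef_mul_wcoef.
rewrite -big_mkcondr /= => sum0; apply/eqP; rewrite -[RHS]sum0.
by apply: eq_big => j; rewrite ?inE // mxE.
Qed.

Lemma sum_homog_coef_col (h : 'cV[A]_t) b j :
  (\sum_(i < m) homog b i (coef_col h b)) j 0 =
  if expo_le (al j) b
  then iota (coef (expo_sub b (al j)) (h j 0)) * mon (expo_sub b (al j)) else 0.
Proof.
rewrite summxE (bigD1 (idx j)) //= big1 => [|i /negPf neij].
  by rewrite !mxE inE eqxx addr0.
by rewrite mxE inE eq_sym neij.
Qed.

Lemma homog_decomposition (h : 'cV[A]_t) : exists S : seq E,
  h = \sum_(b <- S) \sum_(i < m) homog b i (coef_col h b).
Proof.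
have [supp supp0] := fin_all_exists (fun j => coef_finite_support (h j 0)).
pose S := undup (flatten [seq [seq expo_add g (al j) | g <- supp j] | j <- enum 'I_t]).
exists S; apply/matrixP => j z; rewrite (ord1 z) summxE.
under eq_bigr => b _ do rewrite sum_homog_coef_col.
apply: coef_inj => g; rewrite raddf_sum /=; apply: esym.
under eq_bigr => b _ do rewrite (fun_if (coef g)) raddf0 coef_term.
transitivity (\sum_(b <- S | expo_add g (al j) == b) coef g (h j 0)).
  rewrite [RHS]big_mkcond; apply: eq_bigr => b _; rewrite expo_add_eq eq_sym.
  by case: ifP => //= _; case: eqP => // ->.
rewrite -big_filter (@eq_filter _ _ (pred1 (expo_add g (al j)))) => [|b]; last first.
  by rewrite /= eq_sym.
have [gS|gNS] := boolP (expo_add g (al j) \in S).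
  by rewrite filter_pred1_uniq ?undup_uniq // big_seq1.
rewrite (@eq_in_filter _ _ pred0) ?filter_pred0 ?big_nil => [|b bS]; last first.
  by apply/eqP => eb; case/negP: gNS; rewrite -eb.
apply/esym/supp0; apply: contra gNS => gsupp.
rewrite mem_undup; apply/flattenP; exists [seq expo_add g (al j) | g <- supp j].
  by apply: (map_f (fun k => [seq expo_add g (al k) | g <- supp k])); rewrite mem_enum.
exact: map_f.
Qed.

Lemma syzygies_fingen_homog : left_noetherian R -> exists gens : seq 'cV[A]_t,
  (forall g, g \in gens -> syzygy iota x c al idx g /\ homogeneous_syz iota x al idx g) /\
  (forall h, syzygy iota x c al idx h -> is_lincomb gens h).
Proof.
move=> noethR.
have [GG GG_syz GG_span] := fin_all_exists2 (fun p : 'I_m * {set 'I_t} =>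
  left_noetherian_submodule_fingen noethR (Rsyzygy_submodule (lcm_expo p.2) p.1)).
pose lifts p := map (homog (lcm_expo p.2) p.1) (GG p).
exists (flatten [seq lifts p | p <- enum {: 'I_m * {set 'I_t}}]); split.
  move=> g /flattenP[_ /mapP[p _ ->] /mapP[v vGG ->]].
  by split; [apply/homog_syzygy/GG_syz | apply: homog_homogeneous].
move=> h h_syz; have [S ->] := homog_decomposition h.
apply: is_lincomb_sum => b; apply: is_lincomb_sum => i.
have [v' Rsyz' ->] := homog_lcm (syzygy_Rsyzygy b i h_syz).
apply/is_lincombZ/(@is_lincomb_subset _ _ (lifts (i, contrib b i))).
  move=> g gl; apply/flattenP; exists (lifts (i, contrib b i)) => //.
  by apply: (map_f lifts); rewrite mem_enum.
exact/(is_lincomb_map (homog0 _ _) (homogZD _ _))/GG_span.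
Qed.
End Syzygies.

End SkewMonomials.

End PBW.

Theorem proposition36 (R A : nzRingType) (iota : {rmorphism R -> A}) (n : nat)
    (x : 'I_n -> A)
    (hPBW : sigma_PBW iota x) (hqc : quasi_commutative iota x)
    (hbij : bijective_PBW iota x) (hnoeth : left_noetherian R)
    (m t : nat) (c : 'I_t -> R) (hc : forall k, c k != 0)
    (al : 'I_t -> expo n) (idx : 'I_t -> 'I_m) :
  exists gens : seq 'cV[A]_t,
    (forall g, g \in gens -> syzygy iota x c al idx g /\ homogeneous_syz iota x al idx g) /\
    (forall h : 'cV[A]_t, syzygy iota x c al idx h ->
       exists a : 'I_(size gens) -> A,
         h = \sum_(k < size gens) a k *: gens`_k).
Proof.
(* The argument does not need [hc]. *)
have [_ [_ [mon_span [mon_free _]]]] := hPBW.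
have [sigma x_sigma sigma_bij] := quasi_commutative_sigma mon_span mon_free hqc hbij.
have x_swap := quasi_commutative_swap mon_span mon_free hqc hbij.
have [gens [gens_homog gens_span]] :=
  syzygies_fingen_homog mon_span mon_free x_sigma sigma_bij x_swap c al idx hnoeth.
by exists gens; split=> // h /gens_span/is_lincombP.
Qed.
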